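(* (a) If $\mathbf b=(b_1,\dots,b_{k-1})$ is a perfect matching sequence, then $b_v\le v(k-v)$ for every $v=1,\dots,k-1$. (b) For every $1\le v\le k-1$, the sequence $$\mathbf b=(1,2,\dots,v-2,v-1,\ v(k-v),\ k-v-1,k-v-2,\dots,2,1)$$ (i.e. $b_i=i$ for $i<v$, $b_v=v(k-v)$, $b_i=k-i$ for $i>v$) is a perfect matching sequence.
   Context: Fix an integer $k\ge 2$. For a sequence $\mathbf b=(b_1,\dots,b_{k-1})$ of non-negative integers write $|\mathbf b|=\sum_i b_i$. The bipartite graph $\mathcal B_{\mathbf b}$ has upper vertex class $U=\{(j,l):1\le j\le l\le k-1\}$ and lower vertex class $D_{\mathbf b}=\{(i,t):1\le i\le k-1,\ 1\le t\le b_i\}$, with an edge between $(j,l)\in U$ and $(i,t)\in D_{\mathbf b}$ if and only if $j\le i\le l$. The sequence $\mathbf b$ is a matching sequence if $\mathcal B_{\mathbf b}$ has a matching covering all of $D_{\mathbf b}$, and a perfect matching sequence if moreover $|\mathbf b|=\binom k2$. *)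

From mathcomp Require Import all_boot.
Set Implicit Arguments. Unset Strict Implicit. Unset Printing Implicit Defensive.

(* A sequence b = (b_1,...,b_{k-1}) is represented as b : nat -> nat;
   only the values b 1, ..., b (k-1) are relevant. *)

Definition inU (k : nat) (u : nat * nat) : bool :=
  [&& 1 <= u.1, u.1 <= u.2 & u.2 <= k - 1].

Definition inD (k : nat) (b : nat -> nat) (d : nat * nat) : bool :=
  [&& 1 <= d.1, d.1 <= k - 1, 1 <= d.2 & d.2 <= b d.1].

Definition edgeB (u d : nat * nat) : bool := (u.1 <= d.1) && (d.1 <= u.2).

(* A matching covering all of D_b: an injective assignment of each lower
   vertex to an adjacent upper vertex. *)
Definition matching_seq (k : nat) (b : nat -> nat) : Prop :=
  exists f : nat * nat -> nat * nat,
    (forall d, inD k b d -> inU k (f d) /\ edgeB (f d) d) /\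
    (forall d d', inD k b d -> inD k b d' -> f d = f d' -> d = d').

Definition size_seq (k : nat) (b : nat -> nat) : nat := \sum_(1 <= i < k) b i.

Definition perfect_matching_seq (k : nat) (b : nat -> nat) : Prop :=
  matching_seq k b /\ size_seq k b = 'C(k, 2).

From mathcomp Require Import all_boot.
From mathcomp Require Import zify.

Set Implicit Arguments.
Unset Strict Implicit.
Unset Printing Implicit Defensive.

(* The lower vertices (v, t) are all adjacent to the same upper vertices, namely
   the (j, l) with 1 <= j <= v <= l <= k - 1; there are v * (k - v) of them, and
   a matching must send the b_v vertices (v, t) to distinct ones among them.
   Conversely, in the peak sequence the middle vertices (v, t) are matched
   bijectively onto these neighbours by a mixed-radix numbering, (i, t) with
   i < v to (t, i), and (i, t) with i > v to (i, k - t); the three groups of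
   images lie left of, across, and right of v, so the whole map is injective.
   Its size is C(v, 2) + v (k - v) + C(k - v, 2) = C(k, 2). *)

Lemma leq_inj_ord (n m : nat) (g : 'I_n -> nat) :
  injective g -> (forall t, g t < m) -> n <= m.
Proof.
move=> g_inj g_lt; pose h t : 'I_m := Ordinal (g_lt t).
rewrite -[n]card_ord -[m]card_ord; apply: (leq_card h) => t t' /(congr1 val).
exact: g_inj.
Qed.

Lemma bin2_sum1 (n : nat) : \sum_(1 <= i < n) i = 'C(n, 2).
Proof.
rewrite -bin2_sum; case: n => [|n]; first by rewrite !big_geq.
by rewrite [in RHS]big_ltn.
Qed.

Lemma bin2_sum_subn (m n : nat) :
  m <= n -> \sum_(m <= i < n) (n - i) = 'C((n - m).+1, 2).
Proof.
move=> /subnKC <-; rewrite addKn; elim: (n - m) => [|d IH].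
  by rewrite addn0 big_geq.
rewrite addnS big_nat_recl ?leq_addr //.
under eq_bigr do rewrite subSS.
by rewrite IH subSn ?leq_addr // addKn [in RHS]binS bin1 addnC.
Qed.

Lemma bin2D (a b : nat) : 'C(a + b, 2) = 'C(a, 2) + a * b + 'C(b, 2).
Proof.
elim: b => [|b IH]; first by rewrite addn0 muln0 bin0n !addn0.
rewrite addnS binS bin1 IH [in RHS]binS bin1 mulnS; lia.
Qed.

Section Row.

Variables k v : nat.

Definition row_nbr (u : nat * nat) : bool := inU k u && (u.1 <= v <= u.2).

Definition row_code (u : nat * nat) : nat := (u.1 - 1) * (k - v) + (u.2 - v).

Definition row_decode (c : nat) : nat * nat := (c %/ (k - v) + 1, v + c %% (k - v)).

Lemma row_decodeK : cancel row_decode row_code.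
Proof. by move=> c; rewrite /row_code /= addnK addKn -divn_eq. Qed.

Lemma row_code_lt (u : nat * nat) : row_nbr u -> row_code u < v * (k - v).
Proof.
case: u => j l /andP[/and3P[/= j1 _ lk] /andP[/= jv vl]].
have jkv : j * (k - v) <= v * (k - v) by rewrite leq_mul2r jv orbT.
rewrite /row_code /=; apply: leq_trans jkv.
have -> : j * (k - v) = (j - 1) * (k - v) + (k - v).
  by rewrite addnC -mulSn subn1 prednK.
rewrite ltn_add2l; lia.
Qed.

Lemma row_code_inj : {in row_nbr &, injective row_code}.
Proof.
case=> j l [j' l'] /andP[/and3P[/= j1 _ lk] /andP[/= jv vl]].
move=> /andP[/and3P[/= j1' _ lk'] /andP[/= _ vl']]; rewrite /row_code /=.
have kv : 0 < k - v by lia.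
move=> eq_code; have /(congr1 (modn^~ (k - v))) := eq_code.
have /(congr1 (divn^~ (k - v))) := eq_code.
rewrite !modnMDl !divnMDl // !modn_small ?divn_small; try lia.
by move=> eq_j eq_l; congr pair; lia.
Qed.

Lemma row_decode_nbr (c : nat) : c < v * (k - v) -> row_nbr (row_decode c).
Proof.
move=> cv; have /andP[_ kv] : (0 < v) && (0 < k - v).
  by rewrite -muln_gt0 (leq_ltn_trans (leq0n c) cv).
have qv : c %/ (k - v) < v by rewrite ltn_divLR.
have rk : c %% (k - v) < k - v by rewrite ltn_mod.
rewrite /row_nbr /inU /=.
move: qv rk; set q := c %/ _; set r := c %% _; lia.
Qed.

End Row.

Lemma matching_seq_bound (k : nat) (b : nat -> nat) (v : nat) :
  matching_seq k b -> 1 <= v <= k - 1 -> b v <= v * (k - v).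
Proof.
case=> f [f_adj f_inj] /andP[v1 vk].
have Dv (t : 'I_(b v)) : inD k b (v, t.+1) by rewrite /inD /= v1 vk ltn_ord.
have nbr_f (t : 'I_(b v)) : row_nbr k v (f (v, t.+1)).
  by have [uU uv] := f_adj _ (Dv t); apply/andP.
apply: (@leq_inj_ord _ _ (fun t => row_code k v (f (v, t.+1)))); last first.
  by move=> t; apply: row_code_lt.
move=> t t' /(row_code_inj (nbr_f t) (nbr_f t')) /f_inj.
by case/(_ (Dv t) (Dv t')) => /val_inj.
Qed.

Definition peak_seq (k v i : nat) : nat :=
  if i < v then i else if i == v then v * (k - v) else k - i.

Definition peak_match (k v : nat) (d : nat * nat) : nat * nat :=
  if d.1 < v then (d.2, d.1)
  else if d.1 == v then row_decode k v (d.2 - 1)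
  else (d.1, k - d.2).

Section PeakMatch.

Variables k v : nat.

Lemma peak_match_adj (d : nat * nat) :
  inD k (peak_seq k v) d -> inU k (peak_match k v d) /\ edgeB (peak_match k v d) d.
Proof.
case: d => i t /and4P[/= i1 ik t1]; rewrite /peak_seq /peak_match /=.
case: (ltngtP i v) => [iv|vi|<-] ti; rewrite ?/inU ?/edgeB /=; try lia.
have /andP[] // : row_nbr k i (row_decode k i (t - 1)) by apply: row_decode_nbr; lia.
Qed.

Lemma peak_match_side (d : nat * nat) : inD k (peak_seq k v) d ->
  ((peak_match k v d).2 < v) = (d.1 < v) /\ (v < (peak_match k v d).1) = (v < d.1).
Proof.
case: d => i t /and4P[/= _ _ t1]; rewrite /peak_seq /peak_match /=.
case: (ltngtP i v) => [iv|vi|<-] ti.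
- by rewrite /= iv; split=> //; apply/negbTE; rewrite -leqNgt; lia.
- by rewrite /= vi; split=> //; apply/negbTE; rewrite -leqNgt; lia.
have /andP[_ /andP[j_le l_ge]] : row_nbr k i (row_decode k i (t - 1)).
  by apply: row_decode_nbr; lia.
by rewrite ltnNge l_ge ltnNge j_le.
Qed.

Lemma peak_match_inj : {in inD k (peak_seq k v) &, injective (peak_match k v)}.
Proof.
move=> d d' Dd Dd' eq_m.
have [lt_d gt_d] := peak_match_side Dd; have [lt_d' gt_d'] := peak_match_side Dd'.
rewrite eq_m {}lt_d' {}gt_d' in lt_d gt_d.
move: Dd Dd' eq_m lt_d gt_d; case: d d' => i t [i' t'].
move=> /and4P[/= _ _ t1 +] /and4P[/= _ _ t1' +].
rewrite /peak_seq /peak_match /=.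
case: (ltngtP i v) => iv; case: (ltngtP i' v) => iv' //= ti ti'.
- by case=> -> ->.
- by case=> -> eq_t _ _; congr pair; lia.
- by move/(can_inj (row_decodeK k v)) => eq_t _ _; congr pair; lia.
Qed.

End PeakMatch.

Lemma size_peak_seq (k v : nat) :
  1 <= v <= k - 1 -> size_seq k (peak_seq k v) = 'C(k, 2).
Proof.
move=> /andP[v1 vk]; have vk' : v < k by lia.
rewrite /size_seq (big_cat_nat (n := v)) ?(ltnW vk') //= [X in _ + X]big_ltn //.
rewrite {2}/peak_seq ltnn eqxx.
rewrite (@eq_big_nat _ 0 addn 1 v _ (fun i => i)); last first.
  by move=> i /andP[_ iv]; rewrite /peak_seq iv.
rewrite (@eq_big_nat _ 0 addn v.+1 k _ (subn k)); last first.
  by move=> i /andP[vi _]; rewrite /peak_seq ltnNge ltnW //= gtn_eqF.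
rewrite bin2_sum1 bin2_sum_subn // subnSK // -[in RHS](subnKC (ltnW vk')).
by rewrite bin2D addnA.
Qed.

Theorem mainTheorem8 (k : nat) (hk : 2 <= k) :
  (forall b : nat -> nat, perfect_matching_seq k b ->
     forall v : nat, 1 <= v <= k - 1 -> b v <= v * (k - v)) /\
  (forall v : nat, 1 <= v <= k - 1 ->
     perfect_matching_seq k
       (fun i => if i < v then i else if i == v then v * (k - v) else k - i)).
Proof.
split=> [b [mb _] v | v v_in]; first exact: matching_seq_bound mb.
split; last exact: size_peak_seq.
exists (peak_match k v); split; [exact: peak_match_adj | exact: peak_match_inj].
Qed.
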